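(* Let $x\ge 2$ be real and let $2\le\lambda<3$. For a positive integer $n$ let $p_n$ denote the least prime factor of $n$, and for each prime $p\mid n$ define \[ w_p(n)=\begin{cases} 1-\dfrac{\log p}{\log x} & \text{if } p=p_n,\\[2mm] \dfrac{\log p_n}{\log x} & \text{if } p>p_n \text{ and } p<x^{1/2},\\[2mm] 1-\dfrac{\log p}{\log x} & \text{if } p>p_n \text{ and } p\ge x^{1/2},\end{cases} \] and \[ w(n)=1-\frac{1}{3-\lambda}\sum_{\substack{p\mid n\\ p<x}} w_p(n). \] If $n\le x^\lambda$ and $w(n)>0$, then $n$ has at most $2$ distinct prime factors.
   Context: All sums over $p$ run over primes. *)

From Stdlib Require Import Reals.
From mathcomp Require Import all_boot.

(* Least prime factor p_n of n (mathcomp's pdiv; for n > 1 this is the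
   smallest prime divisor). *)
Definition lpf (n : nat) : nat := pdiv n.

Definition wp (x : R) (n p : nat) : R :=
  if p == lpf n then Rminus 1 (Rdiv (ln (INR p)) (ln x))
  else if Rlt_dec (INR p) (sqrt x) then Rdiv (ln (INR (lpf n))) (ln x)
  else Rminus 1 (Rdiv (ln (INR p)) (ln x)).

Definition sum_wp (x : R) (n : nat) : R :=
  List.fold_right Rplus R0
    (List.map (wp x n)
       (filter (fun p => if Rlt_dec (INR p) x then true else false) (primes n))).

Definition w (x lam : R) (n : nat) : R :=
  Rminus 1 (Rmult (Rinv (Rminus 3 lam)) (sum_wp x n)).

From Stdlib Require Import Reals Lra.
From mathcomp Require Import all_boot.
Set Implicit Arguments.
Unset Strict Implicit.
Local Open Scope R_scope.

(* Write [a p = log p / log x] ([Rlog x p]).  Since the distinct primes of [n]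
   multiply to at most [n <= x^lam], their values [a p] sum to at most [lam].
   If some prime [p > p_n] of [n] lies below [x^(1/2)], the weights of [p_n]
   and [p] alone already add up to [(1 - a p_n) + a p_n = 1 >= 3 - lam].
   Otherwise every prime [p < x] of [n] has weight [1 - a p], while every
   prime [p >= x] has [a p >= 1]; so the total weight is at least
   [#primes - sum_p a p >= 3 - lam] as soon as [n] has three distinct prime
   factors.  Either way [w(n) <= 0]. *)

Definition sumR (f : nat -> R) (s : seq nat) : R :=
  List.fold_right Rplus 0 (List.map f s).

Lemma sumR_nil f : sumR f [::] = 0.
Proof. by []. Qed.

Lemma sumR_cons f a s : sumR f (a :: s) = f a + sumR f s.
Proof. by []. Qed.

Lemma sumR_eq_in f g s : {in s, f =1 g} -> sumR f s = sumR g s.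
Proof.
elim: s => [|a s IH] // fg; rewrite !sumR_cons fg ?mem_head // IH // => p ps.
by apply: fg; rewrite inE ps orbT.
Qed.

Lemma sumR_le f g s : {in s, forall p, f p <= g p} -> sumR f s <= sumR g s.
Proof.
elim: s => [|a s IH] fg; rewrite ?sumR_cons; first exact: Rle_refl.
have := fg a (mem_head _ _).
have : sumR f s <= sumR g s by apply: IH => p ps; apply: fg; rewrite inE ps orbT.
lra.
Qed.

Lemma sumR_const c s : sumR (fun=> c) s = INR (size s) * c.
Proof.
elim: s => [|a s IH]; rewrite ?sumR_nil ?sumR_cons; first by rewrite /= Rmult_0_l.
by rewrite IH (S_INR (size s)); ring.
Qed.

Lemma sumR_ge0 f s : {in s, forall p, 0 <= f p} -> 0 <= sumR f s.
Proof. by move=> f_ge0; have := sumR_le f_ge0; rewrite sumR_const; lra. Qed.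

Lemma sumR_sub f g s : sumR (fun p => f p - g p) s = sumR f s - sumR g s.
Proof. by elim: s => [|a s IH]; rewrite ?sumR_nil ?sumR_cons ?IH; lra. Qed.

Lemma sumR_filterC f (P : pred nat) s :
  sumR f s = sumR f (filter P s) + sumR f (filter (predC P) s).
Proof.
elim: s => [|a s IH] /=; first by rewrite sumR_nil; lra.
by case: (P a); rewrite /= !sumR_cons IH; lra.
Qed.

Lemma sumR_ge_term f s a :
  {in s, forall p, 0 <= f p} -> a \in s -> f a <= sumR f s.
Proof.
elim: s => [|b s IH] // f_ge0; rewrite inE sumR_cons.
have f_ge0_s : {in s, forall p, 0 <= f p}.
  by move=> p ps; apply: f_ge0; rewrite inE ps orbT.
have f_b_ge0 := f_ge0 b (mem_head _ _).
case/orP=> [/eqP-> | a_s]; first by have := sumR_ge0 f_ge0_s; lra.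
by have := IH f_ge0_s a_s; lra.
Qed.

Lemma sumR_ge_two_terms f s a b : {in s, forall p, 0 <= f p} -> uniq s ->
  a \in s -> b \in s -> a != b -> f a + f b <= sumR f s.
Proof.
elim: s => [|c s IH] //= f_ge0 /andP [c_s s_uniq]; rewrite !inE sumR_cons.
have f_ge0_s : {in s, forall p, 0 <= f p}.
  by move=> p ps; apply: f_ge0; rewrite inE ps orbT.
have f_c_ge0 := f_ge0 c (mem_head _ _).
case/orP=> [/eqP-> | a_s] /orP [/eqP-> | b_s] a_ne_b.
- by rewrite eqxx in a_ne_b.
- by have := sumR_ge_term f_ge0_s b_s; lra.
- by have := sumR_ge_term f_ge0_s a_s; lra.
- by have := IH f_ge0_s s_uniq a_s b_s a_ne_b; lra.
Qed.

Lemma ln_le y z : 0 < y -> y <= z -> ln y <= ln z.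
Proof.
move=> y_gt0 /Rle_lt_or_eq_dec [y_lt_z | ->]; last exact: Rle_refl.
exact/Rlt_le/ln_increasing.
Qed.

Lemma prodn_seq_gt0 s : all (leq 1) s -> (0 < \prod_(p <- s) p)%N.
Proof. by move=> s_gt0; rewrite big_seq; apply: prodn_cond_gt0; apply/allP. Qed.

Section LogBase.

Variable x : R.
Hypothesis x_gt1 : 1 < x.

Lemma ln_gt0 : 0 < ln x.
Proof. by rewrite -ln_1; apply: ln_increasing; lra. Qed.

Lemma Rlog_le_iff y c : Rlog x y <= c <-> ln y <= c * ln x.
Proof.
have lnx_gt0 := ln_gt0; rewrite /Rlog; split => h.
  by apply: (Rmult_le_reg_r (/ ln x)); [exact: Rinv_0_lt_compat | field_simplify; lra].
by apply: (Rmult_le_reg_r (ln x)) => //; field_simplify; lra.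
Qed.

Lemma Rlog_ge_iff y c : c <= Rlog x y <-> c * ln x <= ln y.
Proof.
have lnx_gt0 := ln_gt0; rewrite /Rlog; split => h.
  by apply: (Rmult_le_reg_r (/ ln x)); [exact: Rinv_0_lt_compat | field_simplify; lra].
by apply: (Rmult_le_reg_r (ln x)) => //; field_simplify; lra.
Qed.

Lemma Rlog_ge0 y : 1 <= y -> 0 <= Rlog x y.
Proof.
by move=> y_ge1; apply/Rlog_ge_iff; rewrite Rmult_0_l -ln_1; apply: ln_le; lra.
Qed.

Lemma Rlog_ge1 y : x <= y -> 1 <= Rlog x y.
Proof. by move=> x_le_y; apply/Rlog_ge_iff; rewrite Rmult_1_l; apply: ln_le; lra. Qed.

Lemma Rlog_lt1 y : 0 < y -> y < x -> Rlog x y < 1.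
Proof.
move=> y_gt0 y_lt_x; have := ln_increasing _ _ y_gt0 y_lt_x.
have lnx_gt0 := ln_gt0; rewrite /Rlog => h.
apply: (Rmult_lt_reg_r (ln x)) => //; field_simplify; lra.
Qed.

Lemma sumR_Rlog_INR s : all (leq 1) s ->
  sumR (fun p => Rlog x (INR p)) s = Rlog x (INR (\prod_(p <- s) p)%N).
Proof.
elim: s => [|a s IH] /=; first by rewrite sumR_nil big_nil /Rlog ln_1; lra.
case/andP=> a_gt0 s_gt0; rewrite sumR_cons big_cons IH // /Rlog -Rdiv_plus_distr.
rewrite -[(_ * _)%N]/(Nat.mul _ _) mult_INR ln_mult //; apply/lt_0_INR/ltP => //.
exact: prodn_seq_gt0.
Qed.

End LogBase.

Lemma primes_gt0 n : all (leq 1) (primes n).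
Proof. by apply/allP => p /(allP (all_prime_primes n)) /prime_gt0. Qed.

Lemma INR_primes_ge1 n p : p \in primes n -> 1 <= INR p.
Proof. by move=> /(allP (primes_gt0 n)) p_gt0; apply/(le_INR 1)/leP. Qed.

Lemma prod_primes_le n : (0 < n)%N -> (\prod_(p <- primes n) p <= n)%N.
Proof.
move=> n_gt0; rewrite [X in (_ <= X)%N]prod_prime_decomp // prime_decompE big_map /=.
rewrite !big_seq; apply: leq_prod => p p_n.
by rewrite -[X in (X <= _)%N]expn1 leq_pexp2l ?logn_gt0 //; apply: (allP (primes_gt0 n)).
Qed.

Lemma sum_Rlog_primes_le x lam n : 1 < x -> (0 < n)%N -> INR n <= Rpower x lam ->
  sumR (fun p => Rlog x (INR p)) (primes n) <= lam.
Proof.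
move=> x_gt1 n_gt0 n_le; rewrite sumR_Rlog_INR ?primes_gt0 //.
apply/Rlog_le_iff => //; rewrite -ln_Rpower; apply: ln_le.
  exact/lt_0_INR/ltP/prodn_seq_gt0/primes_gt0.
by apply: Rle_trans n_le; apply/le_INR/leP/prod_primes_le.
Qed.

Definition below (x : R) (p : nat) : bool :=
  if Rlt_dec (INR p) x then true else false.

Lemma belowP x p : reflect (INR p < x) (below x p).
Proof. by rewrite /below; case: Rlt_dec => h; constructor. Qed.

Lemma sum_wpE x n : sum_wp x n = sumR (wp x n) (filter (below x) (primes n)).
Proof. by []. Qed.

Lemma wp_lpf x n : wp x n (lpf n) = 1 - Rlog x (INR (lpf n)).
Proof. by rewrite /wp eqxx. Qed.

Lemma wp_small x n p :
  p != lpf n -> INR p < sqrt x -> wp x n p = Rlog x (INR (lpf n)).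
Proof. by rewrite /wp => /negbTE-> p_small; case: Rlt_dec. Qed.

Lemma wp_large x n p :
  p != lpf n -> sqrt x <= INR p -> wp x n p = 1 - Rlog x (INR p).
Proof. by rewrite /wp => /negbTE-> p_large; case: Rlt_dec => // p_small; lra. Qed.

Lemma w_nonpos x lam n : lam < 3 -> 3 - lam <= sum_wp x n -> w x lam n <= 0.
Proof.
move=> lam_lt3 sum_ge; rewrite /w.
have inv_gt0 : 0 < / (3 - lam) by apply: Rinv_0_lt_compat; lra.
have := Rmult_le_compat_l _ _ _ (Rlt_le _ _ inv_gt0) sum_ge.
by rewrite Rinv_l; lra.
Qed.

Section Weights.

Variables (x : R) (n : nat).
Hypotheses (x_gt1 : 1 < x) (n_gt1 : (1 < n)%N).

Lemma lpf_in_primes : lpf n \in primes n.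
Proof. by rewrite mem_primes pdiv_prime // pdiv_dvd ltnW. Qed.

Lemma lpf_le p : p \in primes n -> (lpf n <= p)%N.
Proof.
rewrite mem_primes => /and3P [p_prime _ p_dvd].
by apply: pdiv_min_dvd p_dvd; apply: prime_gt1.
Qed.

Lemma wp_ge0 p : p \in primes n -> INR p < x -> 0 <= wp x n p.
Proof.
move=> p_n p_lt_x; have p_ge1 := INR_primes_ge1 p_n.
have Rlog_p_lt1 := Rlog_lt1 x_gt1 (ltac:(lra) : 0 < INR p) p_lt_x.
have [p_lpf|p_ne] := eqVneq p (lpf n); first by subst p; rewrite wp_lpf; lra.
have [p_small|p_large] := Rlt_le_dec (INR p) (sqrt x).
  by rewrite wp_small //; apply/Rlog_ge0/INR_primes_ge1/lpf_in_primes.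
by rewrite wp_large //; lra.
Qed.

Lemma sum_wp_ge1 p :
  p \in primes n -> p != lpf n -> INR p < sqrt x -> 1 <= sum_wp x n.
Proof.
move=> p_n p_ne p_small.
have sqrt_lt_x : sqrt x < x by apply: sqrt_less; lra.
have lpf_le_p : INR (lpf n) <= INR p by apply/le_INR/leP/lpf_le.
have p_below : p \in filter (below x) (primes n).
  by rewrite mem_filter p_n andbT; apply/belowP; lra.
have lpf_below : lpf n \in filter (below x) (primes n).
  by rewrite mem_filter lpf_in_primes andbT; apply/belowP; lra.
have wp_ge0_below : {in filter (below x) (primes n), forall q, 0 <= wp x n q}.
  by move=> q; rewrite mem_filter => /andP [/belowP q_lt_x q_n]; apply: wp_ge0.
have := sumR_ge_two_terms wp_ge0_below (filter_uniq _ (primes_uniq n)) lpf_below p_below.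
by rewrite eq_sym p_ne wp_lpf wp_small // sum_wpE => /(_ isT); lra.
Qed.

Lemma sum_wp_ge_size_sub :
  {in primes n, forall p, p != lpf n -> sqrt x <= INR p} ->
  INR (size (primes n)) - sumR (fun p => Rlog x (INR p)) (primes n) <= sum_wp x n.
Proof.
move=> large; set a := fun p => Rlog x (INR p).
set small := filter (below x) (primes n).
set big := filter (predC (below x)) (primes n).
have sum_wp_small : sum_wp x n = INR (size small) - sumR a small.
  rewrite sum_wpE -/small -[INR _]Rmult_1_r -sumR_const -sumR_sub.
  apply: sumR_eq_in => p; rewrite mem_filter => /andP [_ p_n].
  have [->|p_ne] := eqVneq p (lpf n); first exact: wp_lpf.
  exact/wp_large/large.
have sum_big : INR (size big) <= sumR a big.
  rewrite -[INR _]Rmult_1_r -sumR_const; apply: sumR_le => p.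
  by rewrite mem_filter => /andP [/belowP/Rnot_lt_le x_le_p _]; apply: Rlog_ge1.
have size_split : INR (size small) + INR (size big) = INR (size (primes n)).
  have <- : (size small + size big)%N = size (primes n).
    by rewrite !size_filter count_predC.
  by rewrite -plus_INR.
by have := sumR_filterC a (below x) (primes n); rewrite -/small -/big; lra.
Qed.

End Weights.

Theorem lemma1 (x lam : R) (n : nat) :
  Rle 2 x -> Rle 2 lam -> Rlt lam 3 -> (0 < n)%N ->
  Rle (INR n) (Rpower x lam) -> Rlt 0 (w x lam n) ->
  (size (primes n) <= 2)%N.
Proof.
move=> x_ge2 lam_ge2 lam_lt3 n_gt0 n_le w_gt0.
rewrite leqNgt; apply/negP => three_primes.
have x_gt1 : 1 < x by lra.
have n_gt1 : (1 < n)%N by rewrite ltnNge -ltnS -primes_eq0; case: (primes n) three_primes.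
suff : 3 - lam <= sum_wp x n by move/(w_nonpos lam_lt3); lra.
case: (boolP (has (fun p => (p != lpf n) && below (sqrt x) p) (primes n))).
  case/hasP=> p p_n /andP [p_ne /belowP p_small].
  by have := sum_wp_ge1 x_gt1 n_gt1 p_n p_ne p_small; lra.
move/hasPn=> no_small.
have large : {in primes n, forall p, p != lpf n -> sqrt x <= INR p}.
  move=> p p_n p_ne; apply: Rnot_lt_le => /belowP p_small.
  by have := no_small p p_n; rewrite p_ne p_small.
have := sum_wp_ge_size_sub x_gt1 large.
have := sum_Rlog_primes_le x_gt1 n_gt0 n_le.
have : INR 3 <= INR (size (primes n)) by apply/le_INR/leP.
rewrite [INR 3]/=; lra.
Qed.
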